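(* Let $n\ge2$. 1) The subgroup of $UB_n$ generated by $\sigma_1,\dots,\sigma_{n-1}$ is isomorphic to the braid group $B_n$ (via $\sigma_i\mapsto\sigma_i$). 2) There exist homomorphisms $\varphi_{US}:UB_n\to SG_n$, $\varphi_{UV}:UB_n\to VB_n$, $\varphi_{UB}:UB_n\to B_n$, given by $\sigma_i\mapsto\sigma_i$ for all three, and $c_i\mapsto\tau_i$, $c_i\mapsto\rho_i$, $c_i\mapsto 1$ respectively. 3) $UB_n$ is an Artin group.
   Context: $B_n$ is the group with generators $\sigma_1,\dots,\sigma_{n-1}$ and relations $\sigma_i\sigma_{i+1}\sigma_i=\sigma_{i+1}\sigma_i\sigma_{i+1}$ ($1\le i\le n-2$), $\sigma_i\sigma_j=\sigma_j\sigma_i$ ($|i-j|\ge2$). The universal braid group $UB_n$ has generators $\sigma_1,\dots,\sigma_{n-1},c_1,\dots,c_{n-1}$ and defining relations: the braid relations above, $c_ic_j=c_jc_i$ ($|i-j|\ge2$), and $c_i\sigma_j=\sigma_jc_i$ ($|i-j|\ge2$). The singular braid group $SG_n$ has generators $\sigma_1,\dots,\sigma_{n-1},\tau_1,\dots,\tau_{n-1}$ and relations: the braid relations, $\tau_i\tau_j=\tau_j\tau_i$ ($|i-j|\ge2$), $\tau_i\sigma_j=\sigma_j\tau_i$ ($|i-j|\ge2$), $\tau_i\sigma_i=\sigma_i\tau_i$, $\sigma_i\sigma_{i+1}\tau_i=\tau_{i+1}\sigma_i\sigma_{i+1}$, $\sigma_{i+1}\sigma_i\tau_{i+1}=\tau_i\sigma_{i+1}\sigma_i$.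 The virtual braid group $VB_n$ has generators $\sigma_1,\dots,\sigma_{n-1},\rho_1,\dots,\rho_{n-1}$ and relations: the braid relations, $\rho_i\rho_{i+1}\rho_i=\rho_{i+1}\rho_i\rho_{i+1}$, $\rho_i\rho_j=\rho_j\rho_i$ ($|i-j|\ge2$), $\rho_i^2=1$, $\sigma_i\rho_j=\rho_j\sigma_i$ ($|i-j|\ge2$), $\rho_i\rho_{i+1}\sigma_i=\sigma_{i+1}\rho_i\rho_{i+1}$. An Artin group is a group given by a presentation with generators $a_i$ ($i\in I$) and, for some pairs $i\ne j$, a relation $a_ia_ja_i\cdots=a_ja_ia_j\cdots$ with both sides alternating words of the same length $m_{ij}\ge2$ (and no other relations). *)

From mathcomp Require Import all_boot.
Set Implicit Arguments. Unset Strict Implicit. Unset Printing Implicit Defensive.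

(* A letter is a generator together with an exponent sign:
   (x, false) = x, (x, true) = x^-1. *)
Definition word (X : Type) := seq (X * bool).
Definition ltr {X : Type} (x : X) : X * bool := (x, false).

(* Equality in the group < X | R > : the congruence on words generated by
   free reduction x^e x^-e = 1 and the defining relations r = s. *)
Inductive eqv {X : Type} (R : word X -> word X -> Prop) : word X -> word X -> Prop :=
| eqv_refl w : eqv R w w
| eqv_sym w1 w2 : eqv R w1 w2 -> eqv R w2 w1
| eqv_trans w1 w2 w3 : eqv R w1 w2 -> eqv R w2 w3 -> eqv R w1 w3
| eqv_free (u v : word X) (x : X) (b : bool) :
    eqv R (u ++ (x, b) :: (x, ~~ b) :: v) (u ++ v)
| eqv_rel (u v r s : word X) : R r s -> eqv R (u ++ r ++ v) (u ++ s ++ v).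

Definition inv_word {X : Type} (w : word X) : word X :=
  rev (map (fun p => (p.1, ~~ p.2)) w).

Definition subst {X Y : Type} (f : X -> word Y) (w : word X) : word Y :=
  flatten (map (fun p => if p.2 then inv_word (f p.1) else f p.1) w).

Definition is_hom {X Y : Type} (R1 : word X -> word X -> Prop)
  (R2 : word Y -> word Y -> Prop) (f : X -> word Y) : Prop :=
  forall w1 w2, eqv R1 w1 w2 -> eqv R2 (subst f w1) (subst f w2).

Definition pres_iso {X Y : Type} (R1 : word X -> word X -> Prop)
  (R2 : word Y -> word Y -> Prop) : Prop :=
  exists (f : X -> word Y) (g : Y -> word X),
    [/\ is_hom R1 R2 f, is_hom R2 R1 g,
        (forall x, eqv R1 (subst g (f x)) [:: ltr x]) &
        (forall y, eqv R2 (subst f (g y)) [:: ltr y])].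

(* indices 1..n-1 are represented by i : 'I_(n.-1) (i stands for index i+1) *)
Definition far {k : nat} (i j : 'I_k) : bool := ((i.+2 <= j) || (j.+2 <= i))%N.

Inductive BRel (n : nat) : word 'I_(n.-1) -> word 'I_(n.-1) -> Prop :=
| B_braid (i j : 'I_(n.-1)) : nat_of_ord j = i.+1 ->
    BRel [:: ltr i; ltr j; ltr i] [:: ltr j; ltr i; ltr j]
| B_comm (i j : 'I_(n.-1)) : far i j -> BRel [:: ltr i; ltr j] [:: ltr j; ltr i].

Inductive ugen (n : nat) : Type := Us of 'I_(n.-1) | Uc of 'I_(n.-1).
Inductive UBRel (n : nat) : word (ugen n) -> word (ugen n) -> Prop :=
| U_braid (i j : 'I_(n.-1)) : nat_of_ord j = i.+1 ->
    UBRel [:: ltr (Us i); ltr (Us j); ltr (Us i)] [:: ltr (Us j); ltr (Us i); ltr (Us j)]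
| U_ss (i j : 'I_(n.-1)) : far i j ->
    UBRel [:: ltr (Us i); ltr (Us j)] [:: ltr (Us j); ltr (Us i)]
| U_cc (i j : 'I_(n.-1)) : far i j ->
    UBRel [:: ltr (Uc i); ltr (Uc j)] [:: ltr (Uc j); ltr (Uc i)]
| U_cs (i j : 'I_(n.-1)) : far i j ->
    UBRel [:: ltr (Uc i); ltr (Us j)] [:: ltr (Us j); ltr (Uc i)].

Inductive sgen (n : nat) : Type := Ss of 'I_(n.-1) | St of 'I_(n.-1).
Inductive SGRel (n : nat) : word (sgen n) -> word (sgen n) -> Prop :=
| S_braid (i j : 'I_(n.-1)) : nat_of_ord j = i.+1 ->
    SGRel [:: ltr (Ss i); ltr (Ss j); ltr (Ss i)] [:: ltr (Ss j); ltr (Ss i); ltr (Ss j)]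
| S_ss (i j : 'I_(n.-1)) : far i j ->
    SGRel [:: ltr (Ss i); ltr (Ss j)] [:: ltr (Ss j); ltr (Ss i)]
| S_tt (i j : 'I_(n.-1)) : far i j ->
    SGRel [:: ltr (St i); ltr (St j)] [:: ltr (St j); ltr (St i)]
| S_ts (i j : 'I_(n.-1)) : far i j ->
    SGRel [:: ltr (St i); ltr (Ss j)] [:: ltr (Ss j); ltr (St i)]
| S_tsi (i : 'I_(n.-1)) :
    SGRel [:: ltr (St i); ltr (Ss i)] [:: ltr (Ss i); ltr (St i)]
| S_mix1 (i j : 'I_(n.-1)) : nat_of_ord j = i.+1 ->
    SGRel [:: ltr (Ss i); ltr (Ss j); ltr (St i)] [:: ltr (St j); ltr (Ss i); ltr (Ss j)]
| S_mix2 (i j : 'I_(n.-1)) : nat_of_ord j = i.+1 ->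
    SGRel [:: ltr (Ss j); ltr (Ss i); ltr (St j)] [:: ltr (St i); ltr (Ss j); ltr (Ss i)].

Inductive vgen (n : nat) : Type := Vs of 'I_(n.-1) | Vr of 'I_(n.-1).
Inductive VBRel (n : nat) : word (vgen n) -> word (vgen n) -> Prop :=
| V_braid (i j : 'I_(n.-1)) : nat_of_ord j = i.+1 ->
    VBRel [:: ltr (Vs i); ltr (Vs j); ltr (Vs i)] [:: ltr (Vs j); ltr (Vs i); ltr (Vs j)]
| V_ss (i j : 'I_(n.-1)) : far i j ->
    VBRel [:: ltr (Vs i); ltr (Vs j)] [:: ltr (Vs j); ltr (Vs i)]
| V_rbraid (i j : 'I_(n.-1)) : nat_of_ord j = i.+1 ->
    VBRel [:: ltr (Vr i); ltr (Vr j); ltr (Vr i)] [:: ltr (Vr j); ltr (Vr i); ltr (Vr j)]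
| V_rr (i j : 'I_(n.-1)) : far i j ->
    VBRel [:: ltr (Vr i); ltr (Vr j)] [:: ltr (Vr j); ltr (Vr i)]
| V_rsq (i : 'I_(n.-1)) : VBRel [:: ltr (Vr i); ltr (Vr i)] [::]
| V_sr (i j : 'I_(n.-1)) : far i j ->
    VBRel [:: ltr (Vs i); ltr (Vr j)] [:: ltr (Vr j); ltr (Vs i)]
| V_mix (i j : 'I_(n.-1)) : nat_of_ord j = i.+1 ->
    VBRel [:: ltr (Vr i); ltr (Vr j); ltr (Vs i)] [:: ltr (Vs j); ltr (Vr i); ltr (Vr j)].

Fixpoint alt {I : Type} (a b : I) (k : nat) : word I :=
  if k is k'.+1 then ltr a :: alt b a k' else [::].

(* m i j < 2 encodes "no relation" (m_ij = infinity) *)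
Inductive ArtinRel (I : Type) (m : I -> I -> nat) : word I -> word I -> Prop :=
| A_rel (i j : I) : i <> j -> (2 <= m i j)%N -> ArtinRel m (alt i j (m i j)) (alt j i (m i j)).

Definition is_artin_group {X : Type} (R : word X -> word X -> Prop) : Prop :=
  exists (I : Type) (m : I -> I -> nat),
    (forall i j, m i j = m j i) /\ pres_iso R (ArtinRel m).

Definition emb_BU (n : nat) (i : 'I_(n.-1)) : word (ugen n) := [:: ltr (Us i)].
Definition phi_US (n : nat) (x : ugen n) : word (sgen n) :=
  match x with Us i => [:: ltr (Ss i)] | Uc i => [:: ltr (St i)] end.
Definition phi_UV (n : nat) (x : ugen n) : word (vgen n) :=
  match x with Us i => [:: ltr (Vs i)] | Uc i => [:: ltr (Vr i)] end.
Definition phi_UB (n : nat) (x : ugen n) : word 'I_(n.-1) :=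
  match x with Us i => [:: ltr i] | Uc i => [::] end.

(* Part 2 and the forward half of part 1 hold because every defining relation
   of UB_n is sent to a defining relation of the target group.  For the
   converse of part 1, phi_UB retracts UB_n onto B_n along the embedding, so
   two braid words equal in UB_n are equal in B_n.  Part 3: the presentation
   of UB_n already consists of braid and commutation relations between
   distinct generators, i.e. it is the Artin presentation with m = 3 for
   adjacent sigma's, m = 2 for distant pairs and m = infinity otherwise. *)
From mathcomp Require Import all_boot.

Set Implicit Arguments. Unset Strict Implicit. Unset Printing Implicit Defensive.

Section Presentation.
Variables (X : Type) (R : word X -> word X -> Prop).

Lemma eqv_ctx u v {a b} : eqv R a b -> eqv R (u ++ a ++ v) (u ++ b ++ v).
Proof.
elim=> [w|w1 w2 _ IH|w1 w2 w3 _ IH1 _ IH2|u0 v0 x e|u0 v0 r s Hr].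
- exact: eqv_refl.
- exact: eqv_sym.
- exact: eqv_trans IH2.
- have := eqv_free R (u ++ u0) (v0 ++ v) x e.
  by rewrite -!catA.
- have := eqv_rel (u ++ u0) (v0 ++ v) Hr.
  by rewrite -!catA.
Qed.

Lemma eqv_of_rel r s : R r s -> eqv R r s.
Proof. by move=> Hrs; have := eqv_rel [::] [::] Hrs; rewrite /= !cats0. Qed.

Lemma inv_wordK : involutive (@inv_word X).
Proof.
move=> w; rewrite /inv_word map_rev revK -map_comp.
by elim: w => [|[x e] w IH] //=; rewrite negbK IH.
Qed.

Lemma cat_inv_word w : eqv R (w ++ inv_word w) [::].
Proof.
elim: w => [|[x e] w IH]; first exact: eqv_refl.
rewrite /inv_word /= rev_cons -cats1 -/(inv_word w).
apply: (eqv_trans (w2 := [:: (x, e); (x, ~~ e)])).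
- by have := eqv_ctx [:: (x, e)] [:: (x, ~~ e)] IH; rewrite /= catA.
- exact: (eqv_free R [::] [::]).
Qed.

End Presentation.

Lemma subst_cat (X Y : Type) (f : X -> word Y) u v :
  subst f (u ++ v) = subst f u ++ subst f v.
Proof. by rewrite /subst map_cat flatten_cat. Qed.

Lemma subst_ltr (X : Type) (w : word X) : subst (fun x => [:: ltr x]) w = w.
Proof. by elim: w => [|[x []] w IH] //; rewrite -cat1s subst_cat IH. Qed.

Lemma is_hom_of_rel (X Y : Type) (R1 : word X -> word X -> Prop)
    (R2 : word Y -> word Y -> Prop) (f : X -> word Y) :
  (forall r s, R1 r s -> eqv R2 (subst f r) (subst f s)) -> is_hom R1 R2 f.
Proof.
move=> fR w1 w2; elim=> [w|{}w1 {}w2 _ IH|{}w1 {}w2 w3 _ IH1 _ IH2|u v x e|u v r s Hrs].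
- exact: eqv_refl.
- exact: eqv_sym.
- exact: eqv_trans IH2.
- rewrite -[_ :: _ :: v]/([:: (x, e); (x, ~~ e)] ++ v) !subst_cat.
  rewrite -[subst f u ++ subst f v]/(subst f u ++ [::] ++ subst f v).
  apply: eqv_ctx; rewrite /subst /= cats0.
  case: e => /=; last exact: cat_inv_word.
  by have := @cat_inv_word _ R2 (inv_word (f x)); rewrite inv_wordK.
- rewrite !subst_cat; exact/eqv_ctx/fR.
Qed.

Lemma eqv_subst_retract (X Y : Type) (R1 : word X -> word X -> Prop)
    (R2 : word Y -> word Y -> Prop) (f : X -> word Y) (g : Y -> word X) :
  is_hom R2 R1 g -> cancel (subst f) (subst g) ->
  forall w1 w2, eqv R2 (subst f w1) (subst f w2) -> eqv R1 w1 w2.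
Proof. by move=> gH fK w1 w2 /gH; rewrite !fK. Qed.

Lemma pres_iso_same_gens (X : Type) (R1 R2 : word X -> word X -> Prop) :
  (forall r s, R1 r s -> eqv R2 r s) -> (forall r s, R2 r s -> eqv R1 r s) ->
  pres_iso R1 R2.
Proof.
move=> R12 R21; exists (fun x => [:: ltr x]), (fun x => [:: ltr x]).
split=> [||x|x]; try exact: eqv_refl.
- by apply: is_hom_of_rel => r s; rewrite !subst_ltr; apply: R12.
- by apply: is_hom_of_rel => r s; rewrite !subst_ltr; apply: R21.
Qed.

Lemma farC (k : nat) (i j : 'I_k) : far i j = far j i.
Proof. by rewrite /far orbC. Qed.

Lemma far_neq (k : nat) (i j : 'I_k) : far i j -> i <> j.
Proof. by move=> + eij; rewrite eij /far orbb ltnNge leqnSn. Qed.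

Lemma adjacent_not_far (k : nat) (i j : 'I_k) : nat_of_ord j = i.+1 -> ~~ far i j.
Proof. by rewrite /far => ->; rewrite ltnn ltnNge !leqW. Qed.

Section UniversalBraidGroup.
Variable n : nat.

Lemma emb_BU_hom : is_hom (@BRel n) (@UBRel n) (@emb_BU n).
Proof.
by apply: is_hom_of_rel => r s [i j ij|i j ij]; apply: eqv_of_rel;
  [apply: U_braid | apply: U_ss].
Qed.

Lemma phi_UB_hom : is_hom (@UBRel n) (@BRel n) (@phi_UB n).
Proof.
apply: is_hom_of_rel => r s [i j ij|i j ij|i j _|i j _] /=; try exact: eqv_refl.
- exact/eqv_of_rel/B_braid.
- exact/eqv_of_rel/B_comm.
Qed.

Lemma emb_BUK : cancel (subst (@emb_BU n)) (subst (@phi_UB n)).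
Proof. by elim=> [|[x []] w IH] //=; rewrite subst_cat IH. Qed.

Lemma phi_US_hom : is_hom (@UBRel n) (@SGRel n) (@phi_US n).
Proof.
by apply: is_hom_of_rel => r s [i j ij|i j ij|i j ij|i j ij]; apply: eqv_of_rel;
  [apply: S_braid | apply: S_ss | apply: S_tt | apply: S_ts].
Qed.

Lemma phi_UV_hom : is_hom (@UBRel n) (@VBRel n) (@phi_UV n).
Proof.
apply: is_hom_of_rel => r s [i j ij|i j ij|i j ij|i j ij].
- exact/eqv_of_rel/V_braid.
- exact/eqv_of_rel/V_ss.
- exact/eqv_of_rel/V_rr.
- by apply/eqv_sym/eqv_of_rel/V_sr; rewrite farC.
Qed.

Definition ub_coxeter (x y : ugen n) : nat :=
  match x, y with
  | Us i, Us j => if far i j then 2 else if (i.+1 == j) || (j.+1 == i) then 3 else 0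
  | Uc i, Uc j | Uc i, Us j | Us i, Uc j => if far i j then 2 else 0
  end.

Lemma ub_coxeterC x y : ub_coxeter x y = ub_coxeter y x.
Proof. by case: x y => i [] j /=; rewrite farC // orbC. Qed.

Lemma artin_rel_of_UBRel r s : UBRel r s -> eqv (ArtinRel ub_coxeter) r s.
Proof.
have artin x y k : x <> y -> ub_coxeter x y = k -> (2 <= k)%N ->
    eqv (ArtinRel ub_coxeter) (alt x y k) (alt y x k).
  by move=> xy <- m2; apply/eqv_of_rel/A_rel.
case=> i j ij.
- have /negPf nf := adjacent_not_far ij.
  apply: (artin _ _ 3); rewrite /= ?nf ?ij ?eqxx //.
  by move=> -[eij]; move: ij; rewrite eij => /n_Sn.
- by apply: (artin _ _ 2); rewrite /= ?ij // => -[]; apply: far_neq.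
- by apply: (artin _ _ 2); rewrite /= ?ij // => -[]; apply: far_neq.
- by apply: (artin _ _ 2); rewrite /= ?ij.
Qed.

Lemma UBRel_of_artin_rel r s : ArtinRel ub_coxeter r s -> eqv (@UBRel n) r s.
Proof.
case=> -[] i [] j _ /=.
- case: ifP => [ij _|_]; first exact/eqv_of_rel/U_ss.
  case: ifP => // /orP[] /eqP ij _; first exact/eqv_of_rel/U_braid.
  exact/eqv_sym/eqv_of_rel/U_braid.
- by case: ifP => // ij _; apply/eqv_sym/eqv_of_rel/U_cs; rewrite farC.
- by case: ifP => // ij _; apply/eqv_of_rel/U_cs.
- by case: ifP => // ij _; apply/eqv_of_rel/U_cc.
Qed.

Lemma UB_is_artin_group : is_artin_group (@UBRel n).
Proof.
exists (ugen n), ub_coxeter; split; first exact: ub_coxeterC.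
exact: pres_iso_same_gens artin_rel_of_UBRel UBRel_of_artin_rel.
Qed.

End UniversalBraidGroup.

Theorem proposition1 (n : nat) (hn : (2 <= n)%N) :
  [/\ (* 1) sigma_i |-> sigma_i is a well-defined injective hom B_n -> UB_n,
         i.e. B_n is isomorphic to the subgroup generated by the sigma_i *)
      (forall w1 w2 : word 'I_(n.-1),
          eqv (@BRel n) w1 w2 <->
          eqv (@UBRel n) (subst (@emb_BU n) w1) (subst (@emb_BU n) w2)),
      (* 2) the homomorphisms phi_US, phi_UV, phi_UB exist *)
      is_hom (@UBRel n) (@SGRel n) (@phi_US n) /\
      is_hom (@UBRel n) (@VBRel n) (@phi_UV n) /\
      is_hom (@UBRel n) (@BRel n) (@phi_UB n) &
      (* 3) UB_n is an Artin group *)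
      is_artin_group (@UBRel n)].
Proof.
split.
- move=> w1 w2; split; first exact: emb_BU_hom.
  exact: eqv_subst_retract (@phi_UB_hom n) (@emb_BUK n) w1 w2.
- exact: (conj (@phi_US_hom n) (conj (@phi_UV_hom n) (@phi_UB_hom n))).
- exact: UB_is_artin_group.
Qed.
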